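(* For every formula $A$ of $\mathbf{L_1}$: $\dashv_H A$ if and only if $\dashv_T A$.
   Context: Formulas of $\mathbf{L_1}$: built from atomic formulas $\epsilon ab$ ($a,b$ name variables, possibly equal) with primitive connectives $\vee,\sim$; $\wedge,\supset,\equiv$ defined as usual. Disjunctions may be associated in any way. $\vdash_H A$: $A$ belongs to the smallest set containing all instances of classical propositional tautologies and all formulas $\epsilon ab\supset\epsilon aa$, $(\epsilon ab\wedge\epsilon bc)\supset\epsilon ac$, $(\epsilon ab\wedge\epsilon bb)\supset\epsilon ba$, closed under modus ponens. Positive/negative parts (occurrences): $A$ is a positive part of $A$; if $B\vee C$ is a positive part then $B,C$ are positive parts; if $\sim B$ is a positive part then $B$ is a negative part; if $\sim B$ is a negative part then $B$ is a positive part. $F[B_+]$ ($G[B_-]$) denotes a formula with a specified occurrence of $B$ as positive (negative) part; $F[B_+,C_-]$ etc. denote specified non-overlapping occurrences. Tableaux: reduction rules ($\vee_-$) $G[B\vee C_-]$ $\mapsto$ two branches $G[B\vee C_-]\vee\sim B$, $G[B\vee C_-]\vee\sim C$; ($\epsilon_1$) $G[\epsilon ab_-]\mapsto G[\epsilon ab_-]\vee\sim\epsilon aa$; ($\epsilon_2$) $G[\epsilon ab_-,\epsilon bc_-]\mapsto G[\epsilon ab_-,\epsilon bc_-]\vee\sim\epsilon ac$; ($\epsilon_{3b}$) $G[\epsilon ab_-,\epsilon bb_-]\mapsto G[\epsilon ab_-,\epsilon bb_-]\vee\sim\epsilon ba$. A tableau for $A$ is a finite tree with root $A$ whose non-leaf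 nodes have as children the result of applying one rule. Hintikka formula: a formula $H$ such that (1) $H$ is not of the form $F[B_+,B_-]$; (2) if $B\vee C$ is a negative part of $H$ then $B$ or $C$ is; (3) if $\epsilon ab$ is a negative part then so is $\epsilon aa$; (4) if $\epsilon ab,\epsilon bc$ are negative parts then so is $\epsilon ac$; (5) if $\epsilon ab,\epsilon bb$ are negative parts then so is $\epsilon ba$. $\mathbf{HAR}$: fix a name variable $a_0$; $\dashv_H$ is the smallest set such that $\dashv_H\epsilon a_0a_0$; $\dashv_H\sim\epsilon a_0a_0$; if $\vdash_H A\supset B$ and $\dashv_H B$ then $\dashv_H A$; if $\dashv_H A$ and $A$ is obtained from $B$ by uniform substitution of name variables for name variables then $\dashv_H B$; if $A$ is a Hintikka formula that is a disjunction of atomic or negated atomic formulas, $\dashv_H A$, and $\epsilon ab$ is not a negative part of $A$, then $\dashv_H A\vee\epsilon ab$. Gentzen-type axiomatic rejection $\mathbf{GAR}$: $\dashv_T A$ means that there exists a tableau for $A$ at least one branch of which ends with a Hintikka formula. *)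

From Stdlib Require Import List Bool.
Import ListNotations.

Definition name := nat.

Inductive form : Type :=
| Eps : name -> name -> form
| Or  : form -> form -> form
| Neg : form -> form.

Definition And (A B : form) : form := Neg (Or (Neg A) (Neg B)).
Definition Imp (A B : form) : form := Or (Neg A) B.
Definition Equiv (A B : form) : form := And (Imp A B) (Imp B A).

Inductive pform : Type :=
| PVar : nat -> pform
| POr  : pform -> pform -> pform
| PNeg : pform -> pform.

Fixpoint peval (v : nat -> bool) (P : pform) : bool :=
  match P with
  | PVar n => v n
  | POr P Q => peval v P || peval v Q
  | PNeg P => negb (peval v P)
  end.

Definition ptautology (P : pform) : Prop := forall v, peval v P = true.

Fixpoint pinst (s : nat -> form) (P : pform) : form :=
  match P with
  | PVar n => s n
  | POr P Q => Or (pinst s P) (pinst s Q)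
  | PNeg P => Neg (pinst s P)
  end.

Definition taut_instance (A : form) : Prop :=
  exists (P : pform) (s : nat -> form), ptautology P /\ pinst s P = A.

Inductive provH : form -> Prop :=
| provH_taut : forall A, taut_instance A -> provH A
| provH_ax1 : forall a b, provH (Imp (Eps a b) (Eps a a))
| provH_ax2 : forall a b c, provH (Imp (And (Eps a b) (Eps b c)) (Eps a c))
| provH_ax3 : forall a b, provH (Imp (And (Eps a b) (Eps b b)) (Eps b a))
| provH_mp : forall A B, provH (Imp A B) -> provH A -> provH B.

(* An occurrence is given by the path from the root. *)
Inductive dir : Type := DL | DR | DN.

(* part A pos p B : the occurrence of B at path p is a positive part of A
   (pos = true) or a negative part of A (pos = false). *)
Inductive part (A : form) : bool -> list dir -> form -> Prop :=
| part_self : part A true [] A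
| part_orL : forall p B C, part A true p (Or B C) -> part A true (p ++ [DL]) B
| part_orR : forall p B C, part A true p (Or B C) -> part A true (p ++ [DR]) C
| part_neg : forall s p B, part A s p (Neg B) -> part A (negb s) (p ++ [DN]) B.

Definition pospart (A B : form) : Prop := exists p, part A true p B.
Definition negpart (A B : form) : Prop := exists p, part A false p B.

Definition hintikka (H : form) : Prop :=
  (~ exists B p q, part H true p B /\ part H false q B) /\
  (forall B C, negpart H (Or B C) -> negpart H B \/ negpart H C) /\
  (forall a b, negpart H (Eps a b) -> negpart H (Eps a a)) /\
  (forall a b c, negpart H (Eps a b) -> negpart H (Eps b c) -> negpart H (Eps a c)) /\
  (forall a b, negpart H (Eps a b) -> negpart H (Eps b b) -> negpart H (Eps b a)).

Definition rule_or (G G1 G2 : form) : Prop :=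
  exists B C p, part G false p (Or B C) /\ G1 = Or G (Neg B) /\ G2 = Or G (Neg C).

(* Non-branching rules (eps_1), (eps_2), (eps_3b); two specified occurrences
   are required to be non-overlapping (distinct paths). *)
Definition rule_eps (G G' : form) : Prop :=
  (exists a b p, part G false p (Eps a b) /\ G' = Or G (Neg (Eps a a))) \/
  (exists a b c p q, p <> q /\ part G false p (Eps a b) /\ part G false q (Eps b c)
                     /\ G' = Or G (Neg (Eps a c))) \/
  (exists a b p q, p <> q /\ part G false p (Eps a b) /\ part G false q (Eps b b)
                   /\ G' = Or G (Neg (Eps b a))).

Inductive tree : Type :=
| Leaf  : form -> tree
| Node1 : form -> tree -> tree
| Node2 : form -> tree -> tree -> tree.

Definition root (t : tree) : form :=
  match t with Leaf F | Node1 F _ | Node2 F _ _ => F end.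

Inductive tableau : tree -> Prop :=
| tab_leaf : forall F, tableau (Leaf F)
| tab_node1 : forall F t, rule_eps F (root t) -> tableau t -> tableau (Node1 F t)
| tab_node2 : forall F t1 t2, rule_or F (root t1) (root t2) ->
    tableau t1 -> tableau t2 -> tableau (Node2 F t1 t2).

Inductive hintikka_branch : tree -> Prop :=
| hb_leaf : forall F, hintikka F -> hintikka_branch (Leaf F)
| hb_node1 : forall F t, hintikka_branch t -> hintikka_branch (Node1 F t)
| hb_node2l : forall F t1 t2, hintikka_branch t1 -> hintikka_branch (Node2 F t1 t2)
| hb_node2r : forall F t1 t2, hintikka_branch t2 -> hintikka_branch (Node2 F t1 t2).

Definition rejT (A : form) : Prop :=
  exists t, tableau t /\ root t = A /\ hintikka_branch t.

(* ---------- HAR: -|_H (relative to the fixed name variable a0) ---------- *)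
Fixpoint subst_names (s : name -> name) (A : form) : form :=
  match A with
  | Eps a b => Eps (s a) (s b)
  | Or B C => Or (subst_names s B) (subst_names s C)
  | Neg B => Neg (subst_names s B)
  end.

Inductive lit_disj : form -> Prop :=
| ld_atom : forall a b, lit_disj (Eps a b)
| ld_neg : forall a b, lit_disj (Neg (Eps a b))
| ld_or : forall A B, lit_disj A -> lit_disj B -> lit_disj (Or A B).

Inductive rejH (a0 : name) : form -> Prop :=
| rejH_ax1 : rejH a0 (Eps a0 a0)
| rejH_ax2 : rejH a0 (Neg (Eps a0 a0))
| rejH_mp : forall A B, provH (Imp A B) -> rejH a0 B -> rejH a0 A
| rejH_subst : forall A B (s : name -> name),
    rejH a0 A -> A = subst_names s B -> rejH a0 B
| rejH_ext : forall A a b, hintikka A -> lit_disj A -> rejH a0 A ->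
    ~ negpart A (Eps a b) -> rejH a0 (Or A (Eps a b)).

From Stdlib Require Import List Bool Lia Classical ClassicalEpsilon Cantor.
Import ListNotations.

(* Both rejection predicates are shown equivalent to semantic falsifiability:
   A is falsifiable when some valuation V of the atoms eps a b that validates
   the three epsilon-axioms of H (a "closed" valuation) makes A false.
   - Soundness.  H-theorems are true under closed valuations, and a Hintikka
     formula H is falsified by the closed valuation "eps a b is true iff it is a
     negative part of H".  Hence HAR-rejected formulas (by induction on the
     rejection) and roots of tableaux with a Hintikka branch are falsifiable.
   - Completeness of GAR.  Given V falsifying A, we expand A by tableau rules,
     choosing at each branching a disjunct true under V.  Every formula of the
     branch stays false under V and its negative parts range over a fixed
     finite universe, so the expansion ends in a Hintikka formula.
   - Completeness of HAR.  The disjunction of literals describing V on the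
     names of A is rejected (from a constant instance of an axiom of HAR, then
     by the extension rule with false atoms), and A implies it tautologically. *)

(** * Semantics *)

Fixpoint eval (V : name -> name -> bool) (F : form) : bool :=
  match F with
  | Eps a b => V a b
  | Or B C => eval V B || eval V C
  | Neg B => negb (eval V B)
  end.

(* V validates the three epsilon-axioms of H. *)
Definition closed_val (V : name -> name -> bool) : Prop :=
  (forall a b, V a b = true -> V a a = true) /\
  (forall a b c, V a b = true -> V b c = true -> V a c = true) /\
  (forall a b, V a b = true -> V b b = true -> V b a = true).

Definition falsifiable (A : form) : Prop :=
  exists V, closed_val V /\ eval V A = false.

Lemma eval_pinst V s P : eval V (pinst s P) = peval (fun n => eval V (s n)) P.
Proof. induction P; simpl; congruence. Qed.

Lemma eval_subst V s B : eval V (subst_names s B) = eval (fun x y => V (s x) (s y)) B.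
Proof. induction B; simpl; congruence. Qed.

Fixpoint names (F : form) : list name :=
  match F with Eps a b => [a; b] | Or B C => names B ++ names C | Neg B => names B end.

Lemma names_nonempty F : exists x, In x (names F).
Proof.
  induction F as [a b|B [x Hx] C _|B IH]; simpl; auto.
  - exists a; auto.
  - exists x; apply in_or_app; auto.
Qed.

Lemma eval_agree W V F :
  (forall x y, In x (names F) -> In y (names F) -> W x y = V x y) -> eval W F = eval V F.
Proof.
  induction F; simpl; intro H.
  - apply H; simpl; auto.
  - rewrite IHF1, IHF2; auto; intros; apply H; apply in_or_app; auto.
  - rewrite IHF; auto.
Qed.

(** * Positive and negative parts *)

Lemma part_Or_inv G X s p F : part (Or G X) s p F ->
  (s = true /\ p = [] /\ F = Or G X) \/
  (exists p', p = DL :: p' /\ part G s p' F) \/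
  (exists p', p = DR :: p' /\ part X s p' F).
Proof.
  induction 1.
  - left; auto.
  - destruct IHpart as [[_ [-> E]]|[[p' [-> H']]|[p' [-> H']]]].
    + injection E as -> ->. right; left. exists []. split; [reflexivity|constructor].
    + right; left. exists (p' ++ [DL]). split; [reflexivity|]. eapply part_orL; eauto.
    + right; right. exists (p' ++ [DL]). split; [reflexivity|]. eapply part_orL; eauto.
  - destruct IHpart as [[_ [-> E]]|[[p' [-> H']]|[p' [-> H']]]].
    + injection E as -> ->. right; right. exists []. split; [reflexivity|constructor].
    + right; left. exists (p' ++ [DR]). split; [reflexivity|]. eapply part_orR; eauto.
    + right; right. exists (p' ++ [DR]). split; [reflexivity|]. eapply part_orR; eauto.
  - destruct IHpart as [[_ [-> E]]|[[p' [-> H']]|[p' [-> H']]]].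
    + discriminate.
    + right; left. exists (p' ++ [DN]). split; [reflexivity|]. eapply part_neg; eauto.
    + right; right. exists (p' ++ [DN]). split; [reflexivity|]. eapply part_neg; eauto.
Qed.

Lemma part_Or_left G X s p F : part G s p F -> part (Or G X) s (DL :: p) F.
Proof.
  induction 1.
  - apply (part_orL (Or G X) [] G X). constructor.
  - apply (part_orL _ (DL :: p) B C). auto.
  - apply (part_orR _ (DL :: p) B C). auto.
  - apply (part_neg _ s (DL :: p) B). auto.
Qed.

Lemma part_Or_right G X s p F : part X s p F -> part (Or G X) s (DR :: p) F.
Proof.
  induction 1.
  - apply (part_orR (Or G X) [] G X). constructor.
  - apply (part_orL _ (DR :: p) B C). auto.
  - apply (part_orR _ (DR :: p) B C). auto.
  - apply (part_neg _ s (DR :: p) B). auto.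
Qed.

Lemma part_Neg_inv G s p F : part (Neg G) s p F ->
  (s = true /\ p = [] /\ F = Neg G) \/
  (s = false /\ p = [DN] /\ F = G) \/
  (exists H p', G = Neg H /\ p = DN :: DN :: p' /\ part H s p' F).
Proof.
  induction 1.
  - left; auto.
  - destruct IHpart as [[_ [-> E]]|[[E _]|[K [p' [-> [-> H']]]]]]; try discriminate.
    right; right. exists K, (p' ++ [DL]). repeat split. eapply part_orL; eauto.
  - destruct IHpart as [[_ [-> E]]|[[E _]|[K [p' [-> [-> H']]]]]]; try discriminate.
    right; right. exists K, (p' ++ [DR]). repeat split. eapply part_orR; eauto.
  - destruct IHpart as [[-> [-> E]]|[[-> [-> E]]|[K [p' [-> [-> H']]]]]].
    + injection E as ->. right; left. auto.
    + subst. right; right. exists B, []. repeat split. constructor.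
    + right; right. exists K, (p' ++ [DN]). repeat split. eapply part_neg; eauto.
Qed.

Lemma part_Neg_top G : part (Neg G) false [DN] G.
Proof. apply (part_neg (Neg G) true [] G). constructor. Qed.

Lemma part_Eps_inv a b s p F : part (Eps a b) s p F -> s = true /\ p = [] /\ F = Eps a b.
Proof. induction 1; auto; destruct IHpart as [_ [_ E]]; discriminate. Qed.

Fixpoint size (F : form) : nat :=
  match F with Eps _ _ => 1 | Or A B => S (size A + size B) | Neg A => S (size A) end.

Lemma part_size A s p F : part A s p F -> size F <= size A.
Proof. induction 1; simpl in *; lia. Qed.

Lemma part_functional_bounded n : forall G, size G <= n ->
  forall s s' p F F', part G s p F -> part G s' p F' -> s = s' /\ F = F'.
Proof.
  induction n as [|n IH]; intros G Hs; [destruct G; simpl in Hs; lia|].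
  intros s s' p F F' H1 H2. destruct G as [a b|B C|B]; simpl in Hs.
  - apply part_Eps_inv in H1; apply part_Eps_inv in H2. intuition congruence.
  - apply part_Or_inv in H1; apply part_Or_inv in H2.
    destruct H1 as [[? [? ?]]|[[p1 [? ?]]|[p1 [? ?]]]];
    destruct H2 as [[? [? ?]]|[[p2 [? ?]]|[p2 [? ?]]]]; subst; try discriminate;
    try (split; congruence);
    match goal with E : _ :: _ = _ :: _ |- _ => injection E as <- end;
    [eapply (IH B)|eapply (IH C)]; first [lia|eassumption].
  - apply part_Neg_inv in H1; apply part_Neg_inv in H2.
    destruct H1 as [[? [? ?]]|[[? [? ?]]|[H [p1 [? [? ?]]]]]];
    destruct H2 as [[? [? ?]]|[[? [? ?]]|[H' [p2 [? [? ?]]]]]]; subst; try discriminate;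
    try (split; congruence).
    match goal with E : DN :: DN :: _ = DN :: DN :: _ |- _ => injection E as <- end.
    match goal with E : Neg _ = Neg _ |- _ => injection E as <- end.
    eapply (IH H); [simpl in Hs; lia|eassumption|eassumption].
Qed.

Lemma part_functional G s s' p F F' : part G s p F -> part G s' p F' -> s = s' /\ F = F'.
Proof. apply (part_functional_bounded (size G) G (le_n _)). Qed.

Lemma part_eval V G s p F : part G s p F -> eval V G = false -> eval V F = negb s.
Proof.
  induction 1; intro E; simpl in *; auto.
  - apply IHpart, orb_false_iff in E. tauto.
  - apply IHpart, orb_false_iff in E. tauto.
  - apply IHpart in E. destruct (eval V B), s; simpl in *; congruence.
Qed.

Lemma negpart_Or_left G X F : negpart G F -> negpart (Or G X) F.
Proof. intros [p Hp]. exists (DL :: p). apply part_Or_left; auto. Qed.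

Lemma negpart_Or_Neg G X : negpart (Or G (Neg X)) X.
Proof. exists [DR; DN]. apply part_Or_right. apply part_Neg_top. Qed.

(** * Soundness: rejected formulas are falsifiable *)

Lemma provH_sound F : provH F -> forall V, closed_val V -> eval V F = true.
Proof.
  induction 1 as [A [P [s [HP <-]]]|a b|a b c|a b|A B _ IH1 _ IH2];
    intros V HV; pose proof HV as [h1 [h2 h3]]; simpl.
  - rewrite eval_pinst. apply HP.
  - destruct (V a b) eqn:E; simpl; auto; now rewrite (h1 _ _ E).
  - destruct (V a b) eqn:E1, (V b c) eqn:E2; simpl; auto; now rewrite (h2 _ _ _ E1 E2).
  - destruct (V a b) eqn:E1, (V b b) eqn:E2; simpl; auto; now rewrite (h3 _ _ E1 E2).
  - specialize (IH1 V HV). simpl in IH1. rewrite (IH2 V HV) in IH1. exact IH1.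
Qed.

Definition truth (P : Prop) : bool := if excluded_middle_informative P then true else false.

Lemma truth_spec P : truth P = true <-> P.
Proof. unfold truth; destruct (excluded_middle_informative P); split; auto; discriminate. Qed.

Definition negpart_val (H : form) (x y : name) : bool := truth (negpart H (Eps x y)).

Lemma negpart_val_closed H : hintikka H -> closed_val (negpart_val H).
Proof.
  intros [_ [_ [c3 [c4 c5]]]]. unfold closed_val, negpart_val.
  repeat split; intros; rewrite truth_spec in *; eauto.
Qed.

Lemma negpart_val_parts H : hintikka H -> forall F,
  (forall p, part H true p F -> eval (negpart_val H) F = false) /\
  (forall p, part H false p F -> eval (negpart_val H) F = true).
Proof.
  intros [c1 [c2 _]] F.
  induction F as [x y|B IB C IC|B IB]; split; intros p Hp; simpl.
  - unfold negpart_val. destruct (truth _) eqn:E; auto.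
    apply truth_spec in E as [q Hq]. exfalso. apply c1. eauto.
  - unfold negpart_val. apply truth_spec. exists p; auto.
  - apply orb_false_iff. split.
    + eapply (proj1 IB). eapply part_orL; eauto.
    + eapply (proj1 IC). eapply part_orR; eauto.
  - destruct (c2 B C (ex_intro _ p Hp)) as [[q Hq]|[q Hq]].
    + rewrite (proj2 IB q Hq). reflexivity.
    + rewrite (proj2 IC q Hq). apply orb_true_r.
  - rewrite (proj2 IB (p ++ [DN])); [reflexivity|]. apply (part_neg H true p B Hp).
  - rewrite (proj1 IB (p ++ [DN])); [reflexivity|]. apply (part_neg H false p B Hp).
Qed.

Lemma hintikka_falsifiable H : hintikka H -> falsifiable H.
Proof.
  intro Hh. exists (negpart_val H). split.
  - apply negpart_val_closed; auto.
  - apply (proj1 (negpart_val_parts H Hh H) []). constructor.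
Qed.

Lemma negpart_Or_Eps A a b F : negpart (Or A (Eps a b)) F <-> negpart A F.
Proof.
  split; [|apply negpart_Or_left]. intros [p Hp].
  apply part_Or_inv in Hp as [[E _]|[[p' [_ H']]|[p' [_ H']]]]; [discriminate|exists p'; auto|].
  apply part_Eps_inv in H' as [E _]; discriminate.
Qed.

Lemma hintikka_extend A a b : hintikka A -> ~ negpart A (Eps a b) -> hintikka (Or A (Eps a b)).
Proof.
  intros [c1 [c2 [c3 [c4 c5]]]] Hn.
  repeat split; try (intros *; rewrite !negpart_Or_Eps; eauto; fail).
  intros [B [p [q [Hp Hq]]]].
  apply part_Or_inv in Hq as [[E _]|[[q' [_ Hq]]|[q' [_ Hq]]]]; [discriminate| |].
  2:{ apply part_Eps_inv in Hq as [E _]. discriminate. }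
  apply part_Or_inv in Hp as [[_ [_ E]]|[[p' [_ Hp]]|[p' [_ Hp]]]].
  - subst. apply part_size in Hq. simpl in Hq. lia.
  - apply c1. eauto.
  - apply part_Eps_inv in Hp as [_ [_ ->]]. apply Hn. exists q'. auto.
Qed.

Lemma rejH_falsifiable a0 A : rejH a0 A -> falsifiable A.
Proof.
  induction 1 as [| |A B HAB _ [V [HV E]]|A B s _ [V [HV E]] ->|A a b Hh _ _ _ Hn].
  - exists (fun _ _ => false). split; [repeat split; discriminate|reflexivity].
  - exists (fun _ _ => true). split; [repeat split; reflexivity|reflexivity].
  - exists V. split; auto. pose proof (provH_sound _ HAB V HV) as S. simpl in S.
    rewrite E in S. destruct (eval V A); auto.
  - rewrite eval_subst in E. exists (fun x y => V (s x) (s y)). split; auto.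
    destruct HV as [h1 [h2 h3]]. repeat split; eauto.
  - apply hintikka_falsifiable, hintikka_extend; auto.
Qed.

Lemma rule_eps_disj G G' : rule_eps G G' -> exists X, G' = Or G X.
Proof. intros [[? [? [? [_ E]]]]|[[? [? [? [? [? [_ [_ [_ E]]]]]]]]|[? [? [? [? [_ [_ [_ E]]]]]]]]]; eauto. Qed.

Lemma rule_or_disj G G1 G2 : rule_or G G1 G2 -> (exists X, G1 = Or G X) /\ (exists X, G2 = Or G X).
Proof. intros [B [C [p [_ [-> ->]]]]]. eauto. Qed.

Lemma falsifiable_Or_left G X : falsifiable (Or G X) -> falsifiable G.
Proof. intros [V [HV E]]. exists V. split; auto. simpl in E. apply orb_false_iff in E. tauto. Qed.

Lemma branch_falsifiable t : tableau t -> hintikka_branch t -> falsifiable (root t).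
Proof.
  induction 1 as [F|F t Hr _ IH|F t1 t2 Hr _ IH1 _ IH2]; inversion 1; subst; simpl.
  - apply hintikka_falsifiable; auto.
  - destruct (rule_eps_disj _ _ Hr) as [X E]. apply (falsifiable_Or_left F X).
    rewrite <- E. auto.
  - destruct (rule_or_disj _ _ _ Hr) as [[X E] _]. apply (falsifiable_Or_left F X).
    rewrite <- E. auto.
  - destruct (rule_or_disj _ _ _ Hr) as [_ [X E]]. apply (falsifiable_Or_left F X).
    rewrite <- E. auto.
Qed.

Lemma rejT_falsifiable A : rejT A -> falsifiable A.
Proof. intros [t [Ht [<- Hb]]]. apply branch_falsifiable; auto. Qed.

(** * Completeness of GAR *)

Lemma rejT_leaf G : hintikka G -> rejT G.
Proof. intro H. exists (Leaf G). split; [constructor|split; [reflexivity|constructor; auto]]. Qed.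

Lemma rejT_eps G G' : rule_eps G G' -> rejT G' -> rejT G.
Proof.
  intros R [t [Ht [<- Hb]]]. exists (Node1 G t).
  split; [constructor; auto|split; [reflexivity|constructor; auto]].
Qed.

Lemma rejT_or_l G G1 G2 : rule_or G G1 G2 -> rejT G1 -> rejT G.
Proof.
  intros R [t [Ht [<- Hb]]]. exists (Node2 G t (Leaf G2)).
  split; [constructor; auto; constructor|split; [reflexivity|apply hb_node2l; auto]].
Qed.

Lemma rejT_or_r G G1 G2 : rule_or G G1 G2 -> rejT G2 -> rejT G.
Proof.
  intros R [t [Ht [<- Hb]]]. exists (Node2 G (Leaf G1) t).
  split; [constructor; auto; constructor|split; [reflexivity|apply hb_node2r; auto]].
Qed.

Fixpoint subforms (F : form) : list form :=
  F :: match F with Eps _ _ => [] | Or B C => subforms B ++ subforms C | Neg B => subforms B end.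

Definition atoms_over (N : list name) : list form := flat_map (fun x => map (Eps x) N) N.

Lemma atoms_over_In N F : In F (atoms_over N) <-> exists x y, F = Eps x y /\ In x N /\ In y N.
Proof.
  unfold atoms_over. rewrite in_flat_map. split.
  - intros [x [Hx HF]]. apply in_map_iff in HF as [y [<- Hy]]. eauto.
  - intros [x [y [-> [Hx Hy]]]]. exists x. split; auto. apply in_map; auto.
Qed.

Lemma subform_refl F : In F (subforms F).
Proof. destruct F; simpl; auto. Qed.

Lemma subform_trans A X : In X (subforms A) -> incl (subforms X) (subforms A).
Proof.
  induction A; simpl; intro HX; (destruct HX as [<-|HX]; [apply incl_refl|]); try contradiction.
  - apply in_app_or in HX as [HX|HX]; intros F HF; right; apply in_or_app;
      [left; eapply IHA1|right; eapply IHA2]; eauto.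
  - intros F HF. right. eapply IHA; eauto.
Qed.

Lemma part_subform G s p F : part G s p F -> In F (subforms G).
Proof.
  induction 1; [apply subform_refl|..]; apply (subform_trans _ _ IHpart); simpl; right;
    auto using in_or_app, subform_refl.
Qed.

Lemma names_subform A x y : In (Eps x y) (subforms A) -> In x (names A) /\ In y (names A).
Proof.
  induction A; simpl; intros [E|H]; try discriminate; try contradiction; auto.
  - injection E as -> ->. simpl; auto.
  - apply in_app_or in H as [H|H]; [destruct (IHA1 H)|destruct (IHA2 H)];
      split; apply in_or_app; auto.
Qed.

Section TableauConstruction.

Variable A : form.
Variable V : name -> name -> bool.
Hypothesis HV : closed_val V.

(* The finite universe in which all negative parts of the construction lie. *)
Let U := subforms A ++ atoms_over (names A).

Lemma U_subform X F : In X U -> In F (subforms X) -> In F U.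
Proof.
  intros HX HF. apply in_app_or in HX as [HX|HX]; apply in_or_app.
  - left. eapply subform_trans; eauto.
  - apply atoms_over_In in HX as [x [y [-> Hxy]]]. destruct HF as [<-|[]].
    right. apply atoms_over_In. eauto.
Qed.

Lemma U_part X s p F : In X U -> part X s p F -> In F U.
Proof. intros HX Hp. apply (U_subform X); auto. eapply part_subform; eauto. Qed.

Lemma U_names x y : In (Eps x y) U -> In x (names A) /\ In y (names A).
Proof.
  intro H. apply in_app_or in H as [H|H].
  - apply names_subform; auto.
  - apply atoms_over_In in H as [x' [y' [E Hxy]]]. injection E as -> ->. auto.
Qed.

Lemma U_atom x y : In x (names A) -> In y (names A) -> In (Eps x y) U.
Proof. intros. apply in_or_app; right. apply atoms_over_In. eauto. Qed.

Definition on_track (G : form) : Prop :=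
  eval V G = false /\ (forall p F, part G false p F -> In F U).

(* At most n elements of the universe are not yet negative parts of G. *)
Definition fresh_bound (G : form) (n : nat) : Prop :=
  forall L, NoDup L -> (forall u, In u L -> In u U /\ ~ negpart G u) -> length L <= n.

Lemma on_track_negpart G p F : on_track G -> part G false p F -> eval V F = true.
Proof. intros [E _] Hp. apply (part_eval V _ _ _ _ Hp E). Qed.

Lemma on_track_step G x : on_track G -> In x U -> eval V x = true -> on_track (Or G (Neg x)).
Proof.
  intros [E HG] Hx Ex. split; [simpl; rewrite E, Ex; reflexivity|].
  intros p F Hp. apply part_Or_inv in Hp as [[E1 _]|[[p' [_ Hp]]|[p' [_ Hp]]]];
    [discriminate|eauto|].
  apply part_Neg_inv in Hp as [[E1 _]|[[_ [_ ->]]|[K [q [-> [_ Hq]]]]]]; [discriminate|auto|].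
  apply (U_subform _ _ Hx). simpl. right. eapply part_subform; eauto.
Qed.

Lemma fresh_bound_step G x n : fresh_bound G n -> In x U -> ~ negpart G x ->
  exists m, n = S m /\ fresh_bound (Or G (Neg x)) m.
Proof.
  intros HM Hx Hn.
  assert (K : forall L, NoDup L -> (forall u, In u L -> In u U /\ ~ negpart (Or G (Neg x)) u) ->
                        S (length L) <= n).
  { intros L HL HU. apply (HM (x :: L)).
    - constructor; auto. intro HxL. apply (proj2 (HU x HxL)). apply negpart_Or_Neg.
    - intros u [<-|Hu]; [auto|]. destruct (HU u Hu) as [H1 H2]. split; auto.
      intro H3. apply H2. apply negpart_Or_left; auto. }
  destruct n as [|m].
  - specialize (K [] (NoDup_nil _) ltac:(intros u [])). simpl in K. lia.
  - exists m. split; auto. intros L HL HU. specialize (K L HL HU). lia.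
Qed.

Definition expansion (G x : form) : Prop :=
  In x U /\ ~ negpart G x /\ eval V x = true /\ (rejT (Or G (Neg x)) -> rejT G).

Lemma expansion_or G B C p : on_track G -> part G false p (Or B C) ->
  ~ negpart G B -> ~ negpart G C -> exists x, expansion G x.
Proof.
  intros HG Hp NB NC.
  pose proof (on_track_negpart _ _ _ HG Hp) as EBC. simpl in EBC.
  assert (R : rule_or G (Or G (Neg B)) (Or G (Neg C))) by (exists B, C, p; auto).
  assert (HB : In B U) by (apply (U_part _ _ _ _ (proj2 HG _ _ Hp) (part_orL _ [] B C (part_self _)))).
  assert (HC : In C U) by (apply (U_part _ _ _ _ (proj2 HG _ _ Hp) (part_orR _ [] B C (part_self _)))).
  destruct (eval V B) eqn:EB.
  - exists B. refine (conj HB (conj NB (conj EB _))). exact (rejT_or_l _ _ _ R).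
  - exists C. refine (conj HC (conj NC (conj EBC _))). exact (rejT_or_r _ _ _ R).
Qed.

Lemma expansion_eps1 G a b p : on_track G -> part G false p (Eps a b) ->
  ~ negpart G (Eps a a) -> expansion G (Eps a a).
Proof.
  intros HG Hp Naa. destruct (U_names a b (proj2 HG _ _ Hp)) as [Ha _].
  refine (conj (U_atom a a Ha Ha) (conj Naa (conj _ _))).
  - apply (proj1 HV a b). exact (on_track_negpart _ _ _ HG Hp).
  - apply rejT_eps. left. exists a, b, p. auto.
Qed.

Lemma expansion_eps2 G a b c p q : on_track G -> part G false p (Eps a b) ->
  part G false q (Eps b c) -> ~ negpart G (Eps a c) -> expansion G (Eps a c).
Proof.
  intros HG Hp Hq Nac.
  destruct (U_names a b (proj2 HG _ _ Hp)) as [Ha _].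
  destruct (U_names b c (proj2 HG _ _ Hq)) as [_ Hc].
  refine (conj (U_atom a c Ha Hc) (conj Nac (conj _ _))).
  - apply (proj1 (proj2 HV) a b c);
      [exact (on_track_negpart _ _ _ HG Hp)|exact (on_track_negpart _ _ _ HG Hq)].
  - apply rejT_eps. right; left. exists a, b, c, p, q. repeat split; auto.
    intros ->. destruct (part_functional _ _ _ _ _ _ Hp Hq) as [_ E].
    injection E as -> ->. apply Nac. exists q. auto.
Qed.

Lemma expansion_eps3 G a b p q : on_track G -> part G false p (Eps a b) ->
  part G false q (Eps b b) -> ~ negpart G (Eps b a) -> expansion G (Eps b a).
Proof.
  intros HG Hp Hq Nba.
  destruct (U_names a b (proj2 HG _ _ Hp)) as [Ha Hb].
  refine (conj (U_atom b a Hb Ha) (conj Nba (conj _ _))).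
  - apply (proj2 (proj2 HV) a b);
      [exact (on_track_negpart _ _ _ HG Hp)|exact (on_track_negpart _ _ _ HG Hq)].
  - apply rejT_eps. right; right. exists a, b, p, q. repeat split; auto.
    intros ->. destruct (part_functional _ _ _ _ _ _ Hp Hq) as [_ E].
    injection E as ->. apply Nba. exists q. auto.
Qed.

(* A formula on track is either Hintikka or can be expanded: each failing
   Hintikka condition is repaired by the corresponding tableau rule, and the
   consistency condition holds because G is false under V. *)
Lemma expansion_exists G : on_track G -> ~ hintikka G -> exists x, expansion G x.
Proof.
  intros HG NH. apply NNPP. intro Nx. apply NH. repeat split.
  - intros [B [p [q [Hp Hq]]]]. pose proof (part_eval V _ _ _ _ Hp (proj1 HG)).
    pose proof (on_track_negpart _ _ _ HG Hq). simpl in *. congruence.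
  - intros B C [p Hp]. destruct (classic (negpart G B)); auto.
    destruct (classic (negpart G C)); auto. exfalso. eauto using expansion_or.
  - intros a b [p Hp]. apply NNPP. eauto using expansion_eps1.
  - intros a b c [p Hp] [q Hq]. apply NNPP. eauto using expansion_eps2.
  - intros a b [p Hp] [q Hq]. apply NNPP. eauto using expansion_eps3.
Qed.

Lemma expand_to_hintikka n : forall G, on_track G -> fresh_bound G n -> rejT G.
Proof.
  induction n as [|n IH]; intros G HG Hn;
    (destruct (classic (hintikka G)) as [Hh|NH]; [exact (rejT_leaf G Hh)|]);
    destruct (expansion_exists G HG NH) as [x [Hx [Nx [Ex Hstep]]]];
    destruct (fresh_bound_step G x _ Hn Hx Nx) as [m [Em Hm]]; inversion Em; subst.
  apply Hstep, IH; auto using on_track_step.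
Qed.

Lemma falsified_rejT : eval V A = false -> rejT A.
Proof.
  intro E. apply (expand_to_hintikka (length U)).
  - split; auto. intros p F Hp. apply in_or_app. left. eapply part_subform; eauto.
  - intros L HL HU. apply NoDup_incl_length; auto. intros u Hu. apply (HU u Hu).
Qed.

End TableauConstruction.

Lemma falsifiable_rejT A : falsifiable A -> rejT A.
Proof. intros [V [HV E]]. eapply falsified_rejT; eauto. Qed.

(** * Completeness of HAR *)

Fixpoint encode (F : form) : pform :=
  match F with
  | Eps x y => PVar (to_nat (x, y))
  | Or B C => POr (encode B) (encode C)
  | Neg B => PNeg (encode B)
  end.

Definition decode_atom (n : nat) : form := let (x, y) := of_nat n in Eps x y.

Lemma peval_encode v F : peval v (encode F) = eval (fun x y => v (to_nat (x, y))) F.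
Proof. induction F; cbn [peval encode eval]; congruence. Qed.

Lemma pinst_encode F : pinst decode_atom (encode F) = F.
Proof.
  induction F; cbn [pinst encode]; try congruence.
  unfold decode_atom. rewrite (cancel_of_to (n, n0)). reflexivity.
Qed.

Lemma valid_provH F : (forall W, eval W F = true) -> provH F.
Proof.
  intro HW. apply provH_taut. exists (encode F), decode_atom. split.
  - intro v. rewrite peval_encode. apply HW.
  - apply pinst_encode.
Qed.

(* A formula falsified by a constant valuation is rejected: its a0-instance
   implies eps a0 a0 or ~eps a0 a0, the two axioms of HAR. *)
Lemma rejH_const a0 c K : eval (fun _ _ => c) K = false -> rejH a0 K.
Proof.
  intro E. apply (rejH_subst a0 (subst_names (fun _ => a0) K) K (fun _ => a0)); [|reflexivity].
  apply (rejH_mp a0 _ (if c then Neg (Eps a0 a0) else Eps a0 a0));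
    [|destruct c; constructor].
  apply valid_provH. intro W. simpl. rewrite eval_subst.
  destruct (W a0 a0) eqn:EW, c; simpl; rewrite ?E, ?EW; simpl; auto using orb_true_r.
Qed.

Fixpoint lits (F : form) : list form :=
  match F with Or B C => lits B ++ lits C | _ => [F] end.

Definition disj (K : form) (ls : list form) : form := fold_left Or ls K.

Lemma eval_lits W F : eval W F = existsb (eval W) (lits F).
Proof. induction F; simpl; try rewrite existsb_app; try congruence; rewrite orb_false_r; auto. Qed.

Lemma lits_disj ls : forall K, (forall l, In l ls -> lits l = [l]) ->
  lits (disj K ls) = lits K ++ ls.
Proof.
  unfold disj. induction ls as [|l ls IH]; intros K H; simpl; [rewrite app_nil_r; auto|].
  rewrite IH; [|intros; apply H; simpl; auto]. simpl.
  rewrite (H l (or_introl eq_refl)), <- app_assoc. reflexivity.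
Qed.

Lemma lit_disj_disj ls : forall K, lit_disj K -> (forall l, In l ls -> lit_disj l) ->
  lit_disj (disj K ls).
Proof.
  unfold disj. induction ls as [|l ls IH]; intros K HK H; simpl; auto.
  apply IH; [constructor; auto; apply H; simpl; auto|intros; apply H; simpl; auto].
Qed.

Lemma lit_disj_parts K : lit_disj K -> forall s p F, part K s p F ->
  (s = true /\ ((exists B C, F = Or B C) \/ In F (lits K))) \/
  (s = false /\ exists x y, F = Eps x y /\ In (Neg (Eps x y)) (lits K)).
Proof.
  induction 1 as [a b|a b|B C _ IB _ IC]; intros s p F Hp.
  - apply part_Eps_inv in Hp as [-> [_ ->]]. left. simpl; auto.
  - apply part_Neg_inv in Hp as [[-> [_ ->]]|[[-> [_ ->]]|[K [q [E _]]]]];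
      [left; simpl; auto|right; simpl; eauto 6|discriminate].
  - apply part_Or_inv in Hp as [[-> [_ ->]]|[[q [_ Hq]]|[q [_ Hq]]]]; [left; split; eauto| |].
    + destruct (IB _ _ _ Hq) as [[-> [HO|Hl]]|[-> [x [y [-> Hl]]]]]; simpl;
        [left; split; eauto|left; split; [auto|right; apply in_or_app; auto]
        |right; split; [auto|exists x, y; split; [auto|apply in_or_app; auto]]].
    + destruct (IC _ _ _ Hq) as [[-> [HO|Hl]]|[-> [x [y [-> Hl]]]]]; simpl;
        [left; split; eauto|left; split; [auto|right; apply in_or_app; auto]
        |right; split; [auto|exists x, y; split; [auto|apply in_or_app; auto]]].
Qed.

Lemma lit_disj_negpart K x y : lit_disj K ->
  (negpart K (Eps x y) <-> In (Neg (Eps x y)) (lits K)).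
Proof.
  intro HK. split.
  - intros [p Hp]. destruct (lit_disj_parts K HK _ _ _ Hp) as [[E _]|[_ [x' [y' [E H]]]]];
      [discriminate|]. injection E as -> ->. auto.
  - induction HK; simpl; intro Hi.
    + destruct Hi as [E|[]]; discriminate.
    + destruct Hi as [E|[]]. injection E as -> ->. exists [DN]. apply part_Neg_top.
    + apply in_app_or in Hi as [Hi|Hi].
      * destruct (IHHK1 Hi) as [p Hp]. exists (DL :: p). apply part_Or_left; auto.
      * destruct (IHHK2 Hi) as [p Hp]. exists (DR :: p). apply part_Or_right; auto.
Qed.

Definition literal (V : name -> name -> bool) (x y : name) : form :=
  if V x y then Neg (Eps x y) else Eps x y.

Section CanonicalDescription.

Variable a0 : name.
Variable V : name -> name -> bool.
Hypothesis HV : closed_val V.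
Variable N : list name.

Definition faithful (K : form) : Prop :=
  lit_disj K /\
  (forall x y, In (Neg (Eps x y)) (lits K) <-> In x N /\ In y N /\ V x y = true) /\
  (forall x y, In (Eps x y) (lits K) -> V x y = false).

Lemma faithful_negpart K x y : faithful K ->
  (negpart K (Eps x y) <-> In x N /\ In y N /\ V x y = true).
Proof. intros [HK [Hn _]]. rewrite lit_disj_negpart by exact HK. apply Hn. Qed.

(* Closedness of V makes a faithful disjunction Hintikka. *)
Lemma faithful_hintikka K : faithful K -> hintikka K.
Proof.
  intro HF. pose proof HF as [HK [_ Hp]]. destruct HV as [h1 [h2 h3]].
  assert (NP : forall x y, negpart K (Eps x y) <-> In x N /\ In y N /\ V x y = true)
    by (intros; apply faithful_negpart; auto).
  repeat split.
  - intros [B [p [q [H1 H2]]]].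
    destruct (lit_disj_parts K HK _ _ _ H2) as [[E _]|[_ [x [y [-> Hin]]]]]; [discriminate|].
    destruct (lit_disj_parts K HK _ _ _ H1) as [[_ [[B' [C' E]]|Hl]]|[E _]];
      [discriminate| |discriminate].
    apply Hp in Hl. apply (proj1 (proj2 HF)) in Hin as [_ [_ E]]. congruence.
  - intros B C [p H]. destruct (lit_disj_parts K HK _ _ _ H) as [[E _]|[_ [x [y [E _]]]]];
      discriminate.
  - intros a b H. rewrite NP in *. intuition eauto.
  - intros a b c H1 H2. rewrite NP in *. intuition eauto.
  - intros a b H1 H2. rewrite NP in *. intuition eauto.
Qed.

Lemma faithful_extend K x y : faithful K -> V x y = false -> faithful (Or K (Eps x y)).
Proof.
  intros [HK [Hn Hp]] Ex. split; [constructor; auto; constructor|]. split.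
  - intros a b. simpl. rewrite <- Hn. split; intro H; [|apply in_or_app; auto].
    apply in_app_or in H as [H|[E|[]]]; [auto|discriminate].
  - intros a b H. simpl in H. apply in_app_or in H as [H|[E|[]]]; [auto|].
    injection E as -> ->. auto.
Qed.

Lemma rejH_extend_false_atoms ls : forall K, faithful K -> rejH a0 K ->
  (forall l, In l ls -> exists x y, l = Eps x y /\ V x y = false) -> rejH a0 (disj K ls).
Proof.
  induction ls as [|l ls IH]; intros K HF HR Hl; simpl; auto.
  destruct (Hl l (or_introl eq_refl)) as [x [y [-> Ex]]].
  apply IH; [apply faithful_extend; auto| |intros; apply Hl; simpl; auto].
  apply rejH_ext; auto.
  - apply faithful_hintikka; auto.
  - apply HF.
  - rewrite faithful_negpart by exact HF. intros [_ [_ E]]. congruence.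
Qed.

Definition pairs : list (name * name) := list_prod N N.
Definition negs : list form :=
  map (fun xy => Neg (Eps (fst xy) (snd xy))) (filter (fun xy => V (fst xy) (snd xy)) pairs).
Definition poss : list form :=
  map (fun xy => Eps (fst xy) (snd xy)) (filter (fun xy => negb (V (fst xy) (snd xy))) pairs).

Lemma negs_In l : In l negs <-> exists x y, l = Neg (Eps x y) /\ In x N /\ In y N /\ V x y = true.
Proof.
  unfold negs, pairs. rewrite in_map_iff. split.
  - intros [[x y] [<- H]]. apply filter_In in H as [H E].
    apply in_prod_iff in H. exists x, y. simpl in *. tauto.
  - intros [x [y [-> [Hx [Hy E]]]]]. exists (x, y). split; auto.
    apply filter_In. split; auto. apply in_prod; auto.
Qed.

Lemma poss_In l : In l poss <-> exists x y, l = Eps x y /\ In x N /\ In y N /\ V x y = false.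
Proof.
  unfold poss, pairs. rewrite in_map_iff. split.
  - intros [[x y] [<- H]]. apply filter_In in H as [H E].
    apply in_prod_iff in H. exists x, y. simpl in *. apply negb_true_iff in E. tauto.
  - intros [x [y [-> [Hx [Hy E]]]]]. exists (x, y). split; auto.
    apply filter_In. split; [apply in_prod; auto|]. simpl. rewrite E. reflexivity.
Qed.

Variable x0 : name.
Hypothesis Hx0 : In x0 N.

Definition base : form := match negs with [] => Eps x0 x0 | n :: ns => disj n ns end.

Lemma base_spec : faithful base /\ rejH a0 base /\ incl negs (lits base).
Proof.
  unfold base. destruct negs as [|n ns] eqn:En.
  - assert (Vx0 : V x0 x0 = false).
    { destruct (V x0 x0) eqn:E; auto. exfalso.
      assert (H : In (Neg (Eps x0 x0)) negs) by (apply negs_In; eauto 7).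
      rewrite En in H. destruct H. }
    split; [|split; [apply (rejH_const a0 false); reflexivity|intros _ []]].
    split; [constructor|split].
    + intros x y. split; [intros [E|[]]; discriminate|].
      intros Hxy. assert (H : In (Neg (Eps x y)) negs) by (apply negs_In; eauto 7).
      rewrite En in H. destruct H.
    + intros x y [E|[]]. injection E as <- <-. auto.
  - assert (Hneg : forall l, In l (n :: ns) -> exists x y, l = Neg (Eps x y)).
    { intros l Hl. rewrite <- En in Hl. apply negs_In in Hl as [x [y [-> _]]]. eauto. }
    assert (LK : lits (disj n ns) = negs).
    { rewrite En, lits_disj; [destruct (Hneg n) as [? [? ->]]; simpl; auto|].
      intros l Hl. destruct (Hneg l) as [? [? ->]]; simpl; auto. }
    split; [|split; [|rewrite LK, En; apply incl_refl]].
    + split; [|split].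
      * apply lit_disj_disj; [destruct (Hneg n) as [? [? ->]]|intros l Hl;
          destruct (Hneg l) as [? [? ->]]]; simpl; auto; constructor.
      * intros x y. rewrite LK, negs_In. split.
        -- intros [x' [y' [E H]]]. injection E as -> ->. auto.
        -- intros H. eauto.
      * intros x y. rewrite LK, negs_In. intros [? [? [E _]]]. discriminate.
    + apply (rejH_const a0 true). rewrite eval_lits, LK.
      apply not_true_iff_false. rewrite existsb_exists.
      intros [l [Hl El]]. apply negs_In in Hl as [? [? [-> _]]]. discriminate.
Qed.

Definition canonical : form := disj base poss.

Lemma canonical_rejected : rejH a0 canonical.
Proof.
  destruct base_spec as [HF [HR _]]. apply rejH_extend_false_atoms; auto.
  intros l Hl. apply poss_In in Hl as [x [y [-> [_ [_ E]]]]]. eauto.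
Qed.

Lemma canonical_literals x y : In x N -> In y N -> In (literal V x y) (lits canonical).
Proof.
  intros Hx Hy. destruct base_spec as [_ [_ Hb]]. unfold canonical, literal.
  rewrite lits_disj by (intros l Hl; apply poss_In in Hl as [? [? [-> _]]]; reflexivity).
  apply in_or_app. destruct (V x y) eqn:E.
  - left. apply Hb, negs_In. eauto 7.
  - right. apply poss_In. eauto 7.
Qed.

End CanonicalDescription.

Lemma implies_description V A D : eval V A = false ->
  (forall x y, In x (names A) -> In y (names A) -> In (literal V x y) (lits D)) ->
  provH (Imp A D).
Proof.
  intros HA HD. apply valid_provH. intro W. simpl.
  destruct (eval W D) eqn:ED; [apply orb_true_r|]. rewrite orb_false_r.
  rewrite (eval_agree W V A); [rewrite HA; reflexivity|].
  intros x y Hx Hy. specialize (HD x y Hx Hy). rewrite eval_lits in ED.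
  assert (Hf : eval W (literal V x y) = false).
  { destruct (eval W _) eqn:E; auto. rewrite <- ED. symmetry. apply existsb_exists. eauto. }
  unfold literal in Hf. destruct (V x y); simpl in Hf; auto.
  destruct (W x y); simpl in *; congruence.
Qed.

Lemma falsifiable_rejH a0 A : falsifiable A -> rejH a0 A.
Proof.
  intros [V [HV E]]. destruct (names_nonempty A) as [x0 Hx0].
  apply (rejH_mp a0 A (canonical V (names A) x0)).
  - apply (implies_description V); auto. intros. apply canonical_literals; auto.
  - apply canonical_rejected; auto.
Qed.

Theorem theorem8p2 : forall (a0 : name) (A : form), rejH a0 A <-> rejT A.
Proof.
  intros a0 A. split; intro H.
  - apply falsifiable_rejT, (rejH_falsifiable a0), H.
  - apply falsifiable_rejH, rejT_falsifiable, H.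
Qed.
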